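(* Let $k\ge0$ and $\ell\ge4$ be integers and let $G$ be a bipartite graph of order $n\ge (k+\lfloor\ell/2\rfloor-1)^2-(k+\lfloor\ell/2\rfloor-2)\ell+\ell^2k+\ell^2-\ell$ that contains no subgraph isomorphic to $kS_{\ell-1}\cup P_\ell$. Then $e(G)\le (k+\lfloor\ell/2\rfloor-1)n$.
   Context: $P_\ell$ is the path of order $\ell$; $S_{\ell-1}=K_{1,\ell-1}$ is the star of order $\ell$; $kS_{\ell-1}\cup P_\ell$ is the vertex-disjoint union of $k$ copies of $S_{\ell-1}$ and one $P_\ell$ (for $k=0$ it is just $P_\ell$). $e(G)$ is the number of edges. *)

From mathcomp Require Import all_boot all_order all_algebra.
Set Implicit Arguments. Unset Strict Implicit. Unset Printing Implicit Defensive.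

Definition simple_graph (T : finType) (adj : rel T) : Prop :=
  symmetric adj /\ irreflexive adj.

Definition edge_set (T : finType) (adj : rel T) : {set {set T}} :=
  [set E : {set T} | [exists u, exists v, adj u v && (E == [set u; v])]].

Definition num_edges (T : finType) (adj : rel T) : nat := #|edge_set adj|.

Definition bipartite (T : finType) (adj : rel T) : Prop :=
  exists A : {set T}, forall u v, adj u v -> (u \in A) != (v \in A).

(* Vertices i < k*l form k stars: the block of i is i %/ l and the
   center of each block is the vertex with i %% l = 0.
   Vertices k*l, ..., k*l + l - 1 form the path P_l (consecutive ones adjacent). *)
Definition starsPath_adj (k l : nat) : rel 'I_(k * l + l) :=
  fun i j =>
    if (i < k * l) && (j < k * l) then
      (i %/ l == j %/ l) && ((i %% l == 0) != (j %% l == 0))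
    else if (k * l <= i) && (k * l <= j) then
      (i.+1 == j :> nat) || (j.+1 == i :> nat)
    else false.

Definition contains_subgraph (T U : finType) (adjG : rel T) (adjH : rel U) : Prop :=
  exists f : U -> T, injective f /\ forall x y, adjH x y -> adjG (f x) (f y).
Arguments starsPath_adj : clear implicits.

From mathcomp Require Import all_boot all_order all_algebra.
From mathcomp Require Import zify.
Set Implicit Arguments. Unset Strict Implicit. Unset Printing Implicit Defensive.
Import GRing.Theory Num.Theory.
Local Open Scope nat_scope.

(* We count edges through degree sums (twice the edge count) and
   argue by contradiction from 2(k + t - 1) n < sum of degrees.
   - DegreeSums: degrees inside a vertex set S, and how a density bound
     d |S| < degsum S behaves when a subset of S is removed.
   - BipartitePaths: a bipartite Erdos-Gallai bound: density 2(t - 1) forces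
     a path on l <= 2t + 1 vertices.  By induction we delete vertices of
     degree < t; under minimum degree t a longest path either is long enough
     or closes into an isolated cycle on 2t vertices, which is deleted.
   - StarsAndPath: stars S_{l-1} are built greedily, around vertices of
     very high degree (which always have room for new leaves) and, when
     all degrees are bounded, around any vertex of degree >= l - 1, the
     path being found in what remains; a list of k stars and a path, all
     distinct, is then a copy of k S_{l-1} \cup P_l. *)

Section DegreeSums.
Variables (T : finType) (adj : rel T).
Hypotheses (adj_sym : symmetric adj) (adj_irr : irreflexive adj).

Definition deg (S : {set T}) (v : T) : nat := \sum_(u in S) (adj v u : nat).
Definition degsum (S : {set T}) : nat := \sum_(v in S) deg S v.

Lemma degE (S : {set T}) v : deg S v = #|[set u in S | adj v u]|.
Proof.
rewrite /deg -sum1_card; transitivity (\sum_(u in S | adj v u) 1).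
  by rewrite big_mkcondr /=; apply: eq_bigr => u _; case: adj.
by apply: eq_bigl => u; rewrite inE.
Qed.

Lemma deg_sub (S S' : {set T}) v : S' \subset S -> deg S' v <= deg S v.
Proof.
move=> sub; rewrite !degE; apply: subset_leq_card; apply/subsetP => u.
by rewrite !inE => /andP[/(subsetP sub) -> ->].
Qed.

Lemma deg_le_card (S : {set T}) v : deg S v <= #|S|.
Proof.
rewrite degE; apply: subset_leq_card.
by apply/subsetP => u; rewrite inE => /andP[].
Qed.

Lemma degsum_set0 : degsum set0 = 0.
Proof. by rewrite /degsum big_set0. Qed.

Lemma degsum_split (S X : {set T}) : X \subset S ->
  degsum S = degsum (S :\: X) + \sum_(x in X) deg S x
             + \sum_(u in S :\: X) \sum_(w in X) (adj u w : nat).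
Proof.
move=> sub; have SXE : S :&: X = X by apply/setIidPr.
rewrite /degsum (big_setID X) /= SXE [RHS]addnAC -big_split /= addnC.
congr (_ + _); apply: eq_bigr => u _.
by rewrite /deg (big_setID X) /= SXE addnC.
Qed.

(* Edges leaving S :\: X towards X are counted in the degrees of X. *)
Lemma cross_edges_le (S X : {set T}) : X \subset S ->
  \sum_(u in S :\: X) \sum_(w in X) (adj u w : nat) <= \sum_(x in X) deg S x.
Proof.
move=> sub; rewrite exchange_big /=; apply: leq_sum => x _.
rewrite /deg [leqRHS](big_setID (S :\: X)) /= (setIidPr (subsetDl S X)).
rewrite (eq_bigr (fun u => (adj x u : nat))) ?leq_addr // => u _.
by rewrite adj_sym.
Qed.

Lemma degsum_removal (S X : {set T}) : X \subset S ->
  degsum S <= degsum (S :\: X) + 2 * \sum_(x in X) deg S x.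
Proof.
move=> sub; rewrite (degsum_split sub) mul2n -addnn addnA leq_add2l.
exact: cross_edges_le.
Qed.

Lemma density_removal (S X : {set T}) d d' c : X \subset S ->
  degsum S <= degsum (S :\: X) + c -> d' * (#|S| - #|X|) + c <= d * #|S| ->
  d * #|S| < degsum S -> d' * #|S :\: X| < degsum (S :\: X).
Proof. by move=> sub; rewrite cardsD (setIidPr sub); lia. Qed.

Lemma density_removal_setT (X : {set T}) d :
  (d + 2 * #|X|) * #|T| < degsum setT -> d * #|~: X| < degsum (~: X).
Proof.
move=> dense; rewrite -setTD.
have cost : degsum setT <= degsum (setT :\: X) + 2 * #|X| * #|T|.
  apply: leq_trans (degsum_removal (subsetT X)) _.
  rewrite -mulnA leq_add2l leq_mul2l /= -sum_nat_const.
  by apply: leq_sum => x _; rewrite -cardsT deg_le_card.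
apply: (density_removal (d := d + 2 * #|X|) (subsetT X) cost); rewrite cardsT //.
by rewrite mulnDl leq_add2r leq_mul2l leq_subr orbT.
Qed.

Lemma exists_deg_gt (S : {set T}) d :
  d * #|S| < degsum S -> exists2 v, v \in S & d < deg S v.
Proof.
move=> dense; apply/exists_inP; apply: contraTT dense => /exists_inPn small.
rewrite -leqNgt /degsum mulnC -sum_nat_const; apply: leq_sum => v vS.
by rewrite leqNgt small.
Qed.

Lemma handshake : 2 * num_edges adj <= degsum setT.
Proof.
have sumT F : \sum_(v in [set: T]) F v = \sum_v F v.
  by apply: eq_bigl => v; rewrite inE.
have -> : degsum setT = \sum_(p : T * T | adj p.1 p.2) 1.
  rewrite /degsum /deg sumT (eq_bigr (fun v => \sum_u (adj v u : nat))).
    by rewrite pair_big /= [RHS]big_mkcond /=; apply: eq_bigr => p _; case: adj.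
  by move=> v _; rewrite sumT.
rewrite (partition_big (fun p : T * T => [set p.1; p.2]) (mem (edge_set adj))) /=;
  last first.
  move=> p hp; rewrite inE; apply/existsP; exists p.1; apply/existsP; exists p.2.
  by rewrite hp eqxx.
rewrite /num_edges mulnC -sum_nat_const; apply: leq_sum => E.
rewrite inE => /existsP [u /existsP [v /andP [huv /eqP ->]]].
rewrite (bigD1 (u, v)) /=; last by rewrite huv eqxx.
rewrite (bigD1 (v, u)) /= ?addnA ?leq_addr //.
rewrite adj_sym huv setUC eqxx /= xpair_eqE; apply/negP => /andP [/eqP uv _].
by move: huv; rewrite uv adj_irr.
Qed.

End DegreeSums.

Section BipartitePaths.
Variables (T : finType) (adj : rel T) (A : {set T}) (x0 : T).
Hypothesis adj_sym : symmetric adj.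
Hypothesis adj_bip : forall u v, adj u v -> (u \in A) != (v \in A).
Local Notation deg := (deg adj).
Local Notation degsum := (degsum adj).

Definition pathS (S : {set T}) (p : seq T) : bool :=
  [&& uniq p, sorted adj p & all (fun x => x \in S) p].

Definition longest (S : {set T}) (p : seq T) : Prop :=
  pathS S p /\ forall q, pathS S q -> size q <= size p.

Definition cheap_part (d : nat) (S X : {set T}) : Prop :=
  [/\ X \subset S, 0 < #|X| & degsum S <= degsum (S :\: X) + d * #|X|].

Lemma pathS_sub (S S' : {set T}) p : S \subset S' -> pathS S p -> pathS S' p.
Proof.
move=> sub /and3P[up sp ap]; apply/and3P; split => //.
by apply/allP => x /(allP ap) /(subsetP sub).
Qed.

Lemma pathS_size (S : {set T}) p : pathS S p -> size p <= #|S|.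
Proof.
move=> /and3P[up _ ap]; rewrite -(card_uniqP up); apply: subset_leq_card.
by apply/subsetP => x /(allP ap).
Qed.

Lemma longest_exists (S : {set T}) v : v \in S -> exists p, longest S p.
Proof.
move=> vS; pose P m := [exists q : m.-tuple T, pathS S q].
have P1 : P 1 by apply/existsP; exists [tuple v]; rewrite /pathS /= vS.
have Pbound m : P m -> m <= #|S|.
  by move=> /existsP [q /pathS_size]; rewrite size_tuple.
have [m /existsP [q pq] maxm] := ex_maxnP (ex_intro _ 1 P1) Pbound.
exists q; split => // q' pq'; rewrite size_tuple; apply: maxm.
by apply/existsP; exists (in_tuple q').
Qed.

Lemma path_parity p i : sorted adj p -> i < size p ->
  (nth x0 p i \in A) = odd i (+) (nth x0 p 0 \in A).
Proof.
move=> /sortedP sp; elim: i => [|i IH] lti //=.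
have := adj_bip (sp x0 i lti); rewrite IH ?(ltnW lti) //.
by case: (nth x0 p i.+1 \in A); case: (odd i); case: (nth x0 p 0 \in A).
Qed.

Definition opposite (p : seq T) (j : nat) : seq T :=
  [seq nth x0 p i | i <- iota 0 (size p) & odd i != odd j].

Lemma size_opposite p j :
  size (opposite p j) = count (fun i => odd i != odd j) (iota 0 (size p)).
Proof. by rewrite size_map size_filter. Qed.

Lemma count_odd_iota n : count odd (iota 0 n) = n./2.
Proof.
elim: n => [|n IH] //; rewrite -addn1 iotaD count_cat IH /= addn0 add0n.
by rewrite addn1 -[n.+1]add1n halfD /=; case: (odd n) => /=; lia.
Qed.

Lemma count_parity_double t b : count (fun i => odd i != b) (iota 0 t.*2) = t.
Proof.
elim: t => [|t IH] //; rewrite doubleS -addn2 iotaD count_cat IH /= add0n.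
by rewrite odd_double; case: b {IH} => /=; lia.
Qed.

Lemma nbrs_opposite (S : {set T}) p j : sorted adj p -> j < size p ->
  (forall y, y \in S -> adj (nth x0 p j) y -> y \in p) ->
  [set y in S | adj (nth x0 p j) y] \subset [pred y in opposite p j].
Proof.
move=> sp ltj nbrs; apply/subsetP => y; rewrite inE => /andP[yS ay].
have yp := nbrs y yS ay; have ltyp : index y p < size p by rewrite index_mem.
apply/mapP; exists (index y p); last by rewrite nth_index.
rewrite mem_filter mem_iota /= ltyp andbT.
have := adj_bip ay; rewrite (path_parity sp ltj).
have := path_parity sp ltyp; rewrite nth_index // => ->.
by case: (odd j); case: (odd (index y p)); case: (nth x0 p 0 \in A).
Qed.

Lemma deg_path_vertex (S : {set T}) p j : sorted adj p -> j < size p ->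
  (forall y, y \in S -> adj (nth x0 p j) y -> y \in p) ->
  deg S (nth x0 p j) <= count (fun i => odd i != odd j) (iota 0 (size p)).
Proof.
move=> sp ltj nbrs; rewrite degE -size_opposite.
by apply: leq_trans (card_size _); apply: subset_leq_card; apply: nbrs_opposite.
Qed.

Lemma path_vertex_saturated (S : {set T}) p j i : sorted adj p -> j < size p ->
  (forall y, y \in S -> adj (nth x0 p j) y -> y \in p) ->
  count (fun i => odd i != odd j) (iota 0 (size p)) <= deg S (nth x0 p j) ->
  i < size p -> odd i != odd j -> adj (nth x0 p j) (nth x0 p i).
Proof.
move=> sp ltj nbrs degj lti oddij.
have sub := nbrs_opposite sp ltj nbrs.
have eqcard : #|[set y in S | adj (nth x0 p j) y]| = #|[pred y in opposite p j]|.
  apply/eqP; rewrite eqn_leq subset_leq_card //=.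
  by rewrite -degE (leq_trans (card_size _)) // size_opposite.
suff : nth x0 p i \in [set y in S | adj (nth x0 p j) y] by rewrite inE => /andP[].
rewrite (subset_cardP eqcard sub) /=; apply/mapP; exists i => //.
by rewrite mem_filter mem_iota /= lti oddij.
Qed.

(* A longest path cannot be extended at its head. *)
Lemma longest_head_nbrs (S : {set T}) a p : longest S (a :: p) ->
  forall y, y \in S -> adj a y -> y \in a :: p.
Proof.
move=> [pp maxp] y yS ay; apply/negPn/negP => yp.
have : size (y :: a :: p) <= size (a :: p).
  by apply: maxp; move: pp; rewrite /pathS /= yS yp adj_sym ay.
by rewrite /= ltnn.
Qed.

Lemma longest_cycle_isolated (S : {set T}) q : longest S q -> cycle adj q ->
  forall y x, y \in S -> y \notin q -> x \in q -> ~~ adj y x.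
Proof.
move=> [/and3P [uq _ aq] maxq] cq y x yS yq xq; apply/negP => ayx.
have [i s qE] := rot_to xq.
have cxs : cycle adj (x :: s) by rewrite -qE rot_cycle.
have pxs : path adj x s by move: cxs => /=; rewrite rcons_path => /andP[].
have : size (y :: x :: s) <= size q.
  apply: maxq; apply/and3P; split.
  - by rewrite cons_uniq -qE mem_rot rot_uniq yq uq.
  - by rewrite /= ayx.
  - by move: aq; rewrite -(eq_all_r (mem_rot i q)) qE /= yS.
by rewrite -(size_rot i q) qE /= ltnn.
Qed.

Lemma longest_path_cycle (S : {set T}) t a p : longest S (a :: p) ->
  t <= deg S a -> size (a :: p) <= t.*2 ->
  size (a :: p) = t.*2 /\ cycle adj (a :: p).
Proof.
move=> lp dega szp; have [/and3P [_ sp _] _] := lp.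
have nbrs := longest_head_nbrs lp.
have sz2t : size (a :: p) = t.*2.
  apply/eqP; rewrite eqn_leq szp -geq_half_double -count_odd_iota.
  apply: leq_trans dega (leq_trans (deg_path_vertex sp (ltn0Sn _) nbrs) _).
  by apply: eq_leq; apply: eq_count => i; case: odd.
split => //; rewrite /= rcons_path (sp : path adj a p) /= (last_nth x0) adj_sym.
apply: (path_vertex_saturated sp (ltn0Sn _) nbrs) => //.
  by rewrite sz2t count_parity_double (leq_trans _ dega).
by have := congr1 odd sz2t; rewrite odd_double /=; case: odd.
Qed.

(* Under minimum degree t >= 2, either S contains a path on l <= 2t+1
   vertices, or a longest path spans a whole component X on 2t vertices, all
   of degree at most t, so that removing X costs at most 2(t-1)|X|. *)
Lemma min_degree_path_or_cheap_part (S : {set T}) t l v :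
  2 <= t -> l <= t.*2.+1 -> v \in S -> (forall u, u \in S -> t <= deg S u) ->
  (exists p, pathS S p /\ l <= size p) \/
  exists X, cheap_part (2 * (t - 1)) S X.
Proof.
move=> t2 lt vS mindeg; have [q lq] := longest_exists vS.
have [long|short] := leqP l (size q); first by left; exists q; case: lq.
right; case: q lq short => [[_ maxq] _ | a p lq short].
  by have := maxq [:: v]; rewrite /pathS /= vS => /(_ isT).
have [/and3P [uq sq aq] _] := lq; have aS : a \in S by case/andP: aq.
have szp : size (a :: p) <= t.*2 by rewrite -ltnS (leq_trans short lt).
have [sz2t cq] := longest_path_cycle lq (mindeg a aS) szp.
have isolated := longest_cycle_isolated lq cq.
set X := [set z in a :: p].
have XS : X \subset S by apply/subsetP => z; rewrite inE => /(allP aq).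
have cardX : #|X| = t.*2 by rewrite cardsE (card_uniqP uq) sz2t.
have degX x : x \in X -> deg S x <= t.
  rewrite inE => xq; rewrite -(nth_index x0 xq).
  apply: leq_trans (deg_path_vertex sq _ _) _; first by rewrite index_mem.
    move=> y yS; rewrite nth_index // => axy; apply/negPn/negP => yq.
    by have := isolated y x yS yq xq; rewrite adj_sym axy.
  by rewrite sz2t count_parity_double.
have no_cross : \sum_(u in S :\: X) \sum_(w in X) (adj u w : nat) = 0.
  apply: big1 => u; rewrite !inE => /andP [uX uS]; apply: big1 => w.
  by rewrite inE => wq; rewrite (negbTE (isolated u w uS uX wq)).
exists X; split => //; first by rewrite cardX -muln2; lia.
rewrite (degsum_split adj XS) no_cross addn0 leq_add2l.
apply: leq_trans (_ : \sum_(x in X) t <= _); first exact: leq_sum degX.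
by rewrite sum_nat_const cardX -muln2; nia.
Qed.

(* One reduction step: S contains the path, or a nonempty part X of S can be
   removed at cost at most 2(t-1)|X| (a vertex of degree < t, or the
   component found above). *)
Lemma long_path_or_cheap_part (S : {set T}) t l : 2 <= t -> l <= t.*2.+1 ->
  2 * (t - 1) * #|S| < degsum S ->
  (exists p, pathS S p /\ l <= size p) \/
  exists X, cheap_part (2 * (t - 1)) S X.
Proof.
move=> t2 lt dense.
have [v vS] : exists v, v \in S.
  by apply/set0Pn; apply: contraTneq dense => ->; rewrite degsum_set0.
case: (boolP [exists u in S, deg S u < t]) => [/exists_inP [u uS degu] | ].
  right; exists [set u]; rewrite /cheap_part sub1set cards1 uS; split => //.
  apply: leq_trans (degsum_removal adj_sym (_ : [set u] \subset S)) _.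
    by rewrite sub1set.
  by rewrite big_set1 leq_add2l; lia.
rewrite negb_exists_in => /forallP mindeg.
apply: (min_degree_path_or_cheap_part t2 lt vS) => w wS.
by have := mindeg w; rewrite wS /= -leqNgt.
Qed.

Lemma bipartite_long_path (S : {set T}) t l : 2 <= t -> l <= t.*2.+1 ->
  2 * (t - 1) * #|S| < degsum S -> exists p, pathS S p /\ l <= size p.
Proof.
move=> t2 lt; move: {2}#|S|.+1 (ltnSn #|S|) => n.
elim: n S => [|n IH] S // ltSn dense.
have [//|[X [XS X0 cost]]] := long_path_or_cheap_part t2 lt dense.
have budget : 2 * (t - 1) * (#|S| - #|X|) + 2 * (t - 1) * #|X|
              <= 2 * (t - 1) * #|S|.
  by rewrite -mulnDr subnK // subset_leq_card.
have [|p [pp lp]] := IH (S :\: X) _ (density_removal XS cost budget dense).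
  by have := subset_leq_card XS; rewrite cardsD (setIidPr XS); lia.
by exists p; split => //; apply: pathS_sub pp; apply: subsetDl.
Qed.

End BipartitePaths.

(* For l = 2t resp. l = 2t+1, (k + t - 1)^2 + 3l - 2kl equals
   (k - t - 1)^2 + 2t resp. (k - t - 2)^2 + 4t. *)
Lemma square_bound k t l : 1 <= t -> t.*2 <= l <= t.*2.+1 ->
  2 * k * l <= (k + t - 1) ^ 2 + 3 * l.
Proof.
move=> t1 /andP [l1 l2].
have sq (x : int) : (0 <= x * x)%R by rewrite -expr2 sqr_ge0.
have := sq (k%:Z - t%:Z - 1)%R; have := sq (k%:Z - t%:Z - 2)%R.
rewrite -!muln2 in l1 l2.
have [->|->] : l = t * 2 \/ l = (t * 2).+1 by lia.
all: nia.
Qed.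

(* The vertex bound of the theorem leaves, after removing c < k centres,
   enough vertices to build the remaining k - c stars greedily. *)
Lemma room_for_stars k t l c n : 2 <= t -> 4 <= l -> c < k ->
  2 * k * l <= (k + t - 1) ^ 2 + 3 * l ->
  (k + t - 1) ^ 2 + (l ^ 2 * k + l ^ 2 - l) <= n + (k + t - 2) * l ->
  l * (k * l + l - 2 + (k - c)) <= n - c + l * t.
Proof.
move=> t2 l4 ck.
have [d ->] : exists d, k = c + d.+1 by exists (k - c).-1; lia.
have [u ->] : exists u, t = u.+2 by exists (t - 2); lia.
have [m ->] : exists m, l = m.+4 by exists (l - 4); lia.
have -> : c + d.+1 + u.+2 - 1 = c + d + u + 2 by lia.
have -> : c + d.+1 + u.+2 - 2 = c + d + u + 1 by lia.
have -> : c + d.+1 - c = d.+1 by lia.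
have -> : m.+4 ^ 2 * (c + d.+1) + m.+4 ^ 2 - m.+4
          = m.+4 ^ 2 * (c + d.+1) + m.+4 * m.+3 by rewrite -!mulnn; nia.
have -> : (c + d.+1) * m.+4 + m.+4 - 2 + d.+1 = (c + d.+1) * m.+4 + m.+2 + d.+1.
  by lia.
by rewrite -!mulnn; nia.
Qed.

Section StarsAndPath.
Variables (T : finType) (adj : rel T) (A : {set T}) (x0 : T).
Hypotheses (adj_sym : symmetric adj) (adj_irr : irreflexive adj).
Hypothesis adj_bip : forall u v, adj u v -> (u \in A) != (v \in A).
Local Notation deg := (deg adj).
Local Notation degsum := (degsum adj).

Definition stars (l : nat) (Q : seq T) : Prop :=
  forall i, i < size Q -> i %% l != 0 ->
  adj (nth x0 Q i) (nth x0 Q (i - i %% l)).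

Lemma stars_block l v L : 0 < l -> size L = l.-1 ->
  (forall y, y \in L -> adj v y) -> stars l (v :: L).
Proof.
move=> l0 sL vL i; rewrite /= sL prednK // => il; rewrite modn_small // => i0.
rewrite subnn /=; case: i i0 il => [|j] // _ jl; rewrite adj_sym; apply: vL.
by rewrite /= mem_nth // sL -ltnS prednK.
Qed.

Lemma stars_cat l Q1 Q2 a : size Q1 = a * l -> stars l Q1 -> stars l Q2 ->
  stars l (Q1 ++ Q2).
Proof.
move=> s1 st1 st2 i; rewrite size_cat => il im.
have [ltiQ1|] := ltnP i (size Q1).
  have lt : i - i %% l < size Q1 by apply: leq_ltn_trans ltiQ1; apply: leq_subr.
  by rewrite !nth_cat ltiQ1 lt; apply: st1.
move=> /subnKC iE; move: il im; rewrite -{}iE s1 modnMDl ltn_add2l.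
set j := i - _ => jl jm; have jmj : j %% l <= j by apply: leq_mod.
have -> : a * l + j - j %% l = a * l + (j - j %% l) by lia.
by rewrite !nth_cat -s1 !ltnNge !leq_addr /= !addKn; apply: st2.
Qed.

Lemma pick_star l v (N : {set T}) : 0 < l -> l.-1 <= #|N| ->
  (forall u, u \in N -> adj v u) ->
  exists L, [/\ size L = l.-1, uniq (v :: L), {subset L <= N} & stars l (v :: L)].
Proof.
move=> l0 cardN vN; exists (take l.-1 (enum N)).
have LN : {subset take l.-1 (enum N) <= N} by move=> y /mem_take; rewrite mem_enum.
have sL : size (take l.-1 (enum N)) = l.-1 by rewrite size_takel // -cardE.
split => //; last by apply: stars_block => // y /LN /vN.
rewrite /= take_uniq ?enum_uniq // andbT.
by apply/negP => /LN /vN; rewrite adj_irr.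
Qed.

(* One greedy step: since the density exceeds l - 2, some vertex has degree
   at least l - 1 and is the centre of a star s, whose removal costs at most
   2lD in degree sum when all degrees are at most D. *)
Lemma star_step t l D m (S : {set T}) : l <= t.*2.+1 -> 4 <= l ->
  (forall v, v \in S -> deg S v <= D) ->
  2 * (m.+1 + t - 1) * #|S| < degsum S ->
  exists s, [/\ size s = l, uniq s, stars l s, {subset s <= S}
              & degsum S <= degsum (S :\: [set z in s]) + 2 * (l * D)].
Proof.
move=> lt l4 degD dense.
have [v vS degv] : exists2 v, v \in S & l.-2 < deg S v.
  apply: exists_deg_gt; apply: leq_ltn_trans dense.
  by rewrite leq_mul2r; apply/orP; right; lia.
set N := [set u in S | adj v u].
have cardN : l.-1 <= #|N| by rewrite -degE; lia.
have vN u : u \in N -> adj v u by rewrite inE => /andP[].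
have [L [sL uvL LN stL]] := pick_star (ltnW (ltnW (ltnW l4))) cardN vN.
have vLS : {subset v :: L <= S}.
  move=> z; rewrite in_cons => /orP [/eqP -> // | /LN].
  by rewrite inE => /andP[].
have XS : [set z in v :: L] \subset S by apply/subsetP => z; rewrite inE => /vLS.
have cardX : #|[set z in v :: L]| = l by rewrite cardsE (card_uniqP uvL) /= sL; lia.
exists (v :: L); split => //; first by rewrite /= sL; lia.
apply: leq_trans (degsum_removal adj_sym XS) _; rewrite leq_add2l leq_mul2l /=.
rewrite -cardX -sum_nat_const; apply: leq_sum => x xX.
by apply: degD; apply: (subsetP XS).
Qed.

(* Greedy construction of m stars and a path P_l inside S, when all degrees
   in S are at most D and S is large: star_step keeps the density invariant
   2(m + t - 1) as long as stars are built, and the path is then found by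
   the bipartite path lemma (so no degree bound is needed when m = 0). *)
Lemma stars_and_path t l D m (S : {set T}) : 2 <= t -> l <= t.*2.+1 -> 4 <= l ->
  (0 < m -> forall v, v \in S -> deg S v <= D) ->
  (0 < m -> l * (D + m) <= #|S| + l * t) ->
  2 * (m + t - 1) * #|S| < degsum S ->
  exists Q P, [/\ size Q = m * l, stars l Q, size P = l, sorted adj P
                & uniq (Q ++ P) && all (fun x => x \in S) (Q ++ P)].
Proof.
move=> t2 lt l4; elim: m S => [|m IH] S degD room dense.
  rewrite add0n in dense.
  have [p [/and3P [up sp ap] lp]] :=
    bipartite_long_path x0 adj_sym adj_bip t2 lt dense.
  exists [::], (take l p); split => //=; first exact: size_takel.
    exact: take_sorted.
  by rewrite take_uniq //=; apply/allP => z /mem_take /(allP ap).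
have {}degD := degD (ltn0Sn m); have {}room := room (ltn0Sn m).
have [s [ss us sts sS cost]] := star_step lt l4 degD dense.
set X := [set z in s].
have XS : X \subset S by apply/subsetP => z; rewrite inE => /sS.
have cardX : #|X| = l by rewrite cardsE (card_uniqP us) ss.
have XleS : l <= #|S| by rewrite -cardX subset_leq_card.
have budget : 2 * (m + t - 1) * (#|S| - #|X|) + 2 * (l * D)
              <= 2 * (m.+1 + t - 1) * #|S| by rewrite cardX; nia.
have [||Q [P [sQ stQ sP sortP /andP [uQP QPS]]]] :=
  IH (S :\: X) _ _ (density_removal XS cost budget dense).
- move=> _ w wSX; apply: leq_trans (deg_sub adj w (subsetDl S X)) _.
  by apply: degD; apply: (subsetP (subsetDl S X)).
- by move=> _; rewrite cardsD (setIidPr XS) cardX; nia.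
exists (s ++ Q), P; split => //.
- by rewrite size_cat ss sQ mulSn.
- by apply: (stars_cat (a := 1)) => //; rewrite ss mul1n.
have QPSX z : z \in Q ++ P -> z \in S :\: X by move/(allP QPS).
rewrite -catA cat_uniq uQP us andbT all_cat; apply/and3P; split.
- by apply/hasPn => z /QPSX; rewrite !inE => /andP [].
- by apply/allP => z /sS.
- by apply/allP => z /QPSX; rewrite inE => /andP[].
Qed.

Lemma centre_stars l K cs R : 0 < l -> uniq (cs ++ R) ->
  (forall c, c \in cs -> K + l.-1 <= deg setT c) ->
  size R + size cs * l <= K + l ->
  exists Qc, [/\ size Qc = size cs * l, stars l Qc & uniq (Qc ++ R)].
Proof.
move=> l0; elim: cs R => [|c cs IH] R ucR degcs szR; first by exists [::].
have [|||Q [sQ stQ uQcR]] := IH (c :: R).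
- by rewrite -cat1s uniq_catCA cat1s -cat_cons.
- by move=> c' c'cs; apply: degcs; rewrite in_cons c'cs orbT.
- by move: szR => /=; rewrite mulSn; lia.
move: uQcR; rewrite -cat1s uniq_catCA cat1s cons_uniq => /andP [cQR uQR].
set N := [set u | adj c u] :\: [set u in Q ++ R].
have cardN : l.-1 <= #|N|.
  have := degcs c (mem_head _ _); rewrite degE cardsD.
  have -> : [set u in setT | adj c u] = [set u | adj c u].
    by apply/setP => u; rewrite !inE.
  have : #|[set u | adj c u] :&: [set u in Q ++ R]| <= size (Q ++ R).
    apply: leq_trans (card_size (Q ++ R)); apply: subset_leq_card.
    by apply/subsetP => u; rewrite !inE => /andP[_].
  by move: szR; rewrite size_cat sQ /= mulSn; lia.
have cN u : u \in N -> adj c u by rewrite !inE => /andP[_].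
have [L [sL ucL LN stL]] := pick_star l0 cardN cN.
exists ((c :: L) ++ Q); split.
- by rewrite size_cat /= sL sQ mulSn prednK.
- by apply: (stars_cat (a := 1)) => //; rewrite /= sL mul1n prednK.
rewrite -catA cat_uniq uQR ucL /= andbT; apply/hasPn => z zQR.
rewrite in_cons negb_or; apply/andP; split.
  by apply: contraNneq cQR => <-.
by apply/negP => /LN; rewrite !inE zQR.
Qed.

(* k stars followed by a path on l vertices, all distinct, form a copy of
   k S_{l-1} \cup P_l in G: map the i-th vertex of starsPath_adj to the i-th
   vertex of the sequence. *)
Lemma embed_stars_path k l Q P : size Q = k * l -> stars l Q ->
  size P = l -> sorted adj P -> uniq (Q ++ P) ->
  contains_subgraph adj (starsPath_adj k l).
Proof.
move=> sQ stQ sP sortP uQP.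
have sQP : size (Q ++ P) = k * l + l by rewrite size_cat sQ sP.
exists (fun i : 'I_(k * l + l) => nth x0 (Q ++ P) i); split.
  by move=> i j /eqP; rewrite nth_uniq ?sQP // => /eqP; apply: val_inj.
have nthQ i : i < k * l -> nth x0 (Q ++ P) i = nth x0 Q i.
  by move=> ikl; rewrite nth_cat sQ ikl.
have nthP i : k * l <= i -> nth x0 (Q ++ P) i = nth x0 P (i - k * l).
  by move=> kli; rewrite nth_cat sQ ltnNge kli.
have block_start i j : i %/ l = j %/ l -> i %% l = 0 -> j - j %% l = i.
  by move=> qij i0; rewrite {1}(divn_eq j l) addnK -qij {2}(divn_eq i l) i0 addn0.
have pathP i j : k * l <= i -> i.+1 = j -> j < k * l + l ->
  adj (nth x0 P (i - k * l)) (nth x0 P (j - k * l)).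
  move=> kli <- jl; rewrite subSn //; apply: (sortedP x0 sortP).
  by rewrite sP; lia.
move=> i j; rewrite /starsPath_adj.
case: ifP => [/andP [ikl jkl] /andP [/eqP qij] | _].
  rewrite !nthQ //; have [i0|i0] /= := eqVneq (i %% l) 0.
    by rewrite -(block_start i j qij i0) adj_sym; apply: stQ; rewrite ?sQ.
  case: (j %% l =P 0) => [j0 _ | //].
  by rewrite -(block_start j i (esym qij) j0); apply: stQ; rewrite ?sQ.
case: ifP => [/andP [kli klj] /orP [/eqP e | /eqP e] | //]; rewrite !nthP //.
  exact: pathP e (ltn_ord j).
by rewrite adj_sym; apply: pathP e (ltn_ord i).
Qed.

Lemma high_degree_centres D k : exists cs, [/\ uniq cs, size cs <= k,
  forall c, c \in cs -> D <= deg setT c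
  & size cs < k -> forall v, v \notin cs -> deg setT v < D].
Proof.
set B := [set v | D <= deg setT v]; exists (take k (enum B)); split.
- by rewrite take_uniq // enum_uniq.
- by rewrite size_take_min geq_minl.
- by move=> c /mem_take; rewrite mem_enum inE.
rewrite size_take; case: ifP => [_ | /negbT]; first by rewrite ltnn.
rewrite -leqNgt => leBk _ v.
by rewrite take_oversize // mem_enum inE -ltnNge.
Qed.

(* Remove c <= k centres of degree at
   least kl + l - 1 (all of them if there are fewer than k): at a cost of at
   most cn edges the rest S0 keeps density k - c + t - 1, and if c < k its
   degrees are at most kl + l - 2, so stars_and_path finds k - c stars and
   the path in S0; centre_stars then adds the c stars around the centres. *)
Lemma dense_contains_stars_path k t l : 2 <= t -> t.*2 <= l <= t.*2.+1 ->
  (k + t - 1) ^ 2 + (l ^ 2 * k + l ^ 2 - l) <= #|T| + (k + t - 2) * l ->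
  2 * (k + t - 1) * #|T| < degsum setT ->
  contains_subgraph adj (starsPath_adj k l).
Proof.
move=> t2 lt large dense; have /andP [l1 l2] := lt.
have l4 : 4 <= l by move: l1; rewrite -muln2; lia.
have [cs [ucs ck csdeg few]] := high_degree_centres (k * l + l.-1) k.
set c := size cs in ck few; set X := [set x in cs]; set S0 := ~: X.
have cardX : #|X| = c by rewrite cardsE (card_uniqP ucs).
have cardS0 : #|S0| = #|T| - c by rewrite -cardX -(cardsC X) addKn.
have dense0 : 2 * (k - c + t - 1) * #|S0| < degsum S0.
  apply: (density_removal_setT adj_sym (X := X)); rewrite cardX.
  by have -> : 2 * (k - c + t - 1) + 2 * c = 2 * (k + t - 1) by lia.
have deg0 : 0 < k - c -> forall v, v \in S0 -> deg S0 v <= k * l + l - 2.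
  move=> kc v; rewrite !inE => vX.
  apply: leq_trans (deg_sub adj v (subsetT S0)) _.
  have ltck : c < k by lia.
  by have := few ltck v vX; lia.
have room : 0 < k - c -> l * (k * l + l - 2 + (k - c)) <= #|S0| + l * t.
  move=> kc; rewrite cardS0; apply: room_for_stars => //; first by lia.
  by apply: square_bound => //; lia.
have [Q [P [sQ stQ sP sortP /andP [uQP QPS0]]]] :=
  stars_and_path t2 l2 l4 deg0 room dense0.
have ucsQP : uniq (cs ++ Q ++ P).
  rewrite cat_uniq ucs uQP andbT /=; apply/hasPn => z /(allP QPS0).
  by rewrite !inE.
have sizeQP : size (Q ++ P) + c * l <= k * l + l.
  by rewrite size_cat sQ sP addnAC -mulnDl subnK.
have [Qc [sQc stQc uQcQP]] :=
  centre_stars (K := k * l) (ltnW (ltnW (ltnW l4))) ucsQP csdeg sizeQP.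
apply: (embed_stars_path (Q := Qc ++ Q) _ _ sP sortP); last by rewrite -catA.
- by rewrite size_cat sQc sQ -mulnDl subnKC.
- exact: stars_cat sQc stQc stQ.
Qed.

End StarsAndPath.

Theorem lemma3p2 (k l : nat) (T : finType) (adj : rel T) :
  4 <= l ->
  simple_graph adj ->
  bipartite adj ->
  (((k + l./2 - 1) ^ 2)%:Z - ((k + l./2 - 2) * l)%:Z
     + (l ^ 2 * k + l ^ 2 - l)%:Z <= (#|T|)%:Z)%R ->
  ~ contains_subgraph adj (starsPath_adj k l) ->
  num_edges adj <= (k + l./2 - 1) * #|T|.
Proof.
move=> l4 [adj_sym adj_irr] [A adj_bip] large_int no_copy.
have large : (k + l./2 - 1) ^ 2 + (l ^ 2 * k + l ^ 2 - l)
             <= #|T| + (k + l./2 - 2) * l by lia.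
have t2 : 2 <= l./2 by rewrite geq_half_double.
have lt : (l./2).*2 <= l <= (l./2).*2.+1.
  by rewrite -geq_half_double -leq_half_double leqnn.
rewrite leqNgt; apply/negP => many_edges; apply: no_copy.
have dense : 2 * (k + l./2 - 1) * #|T| < degsum adj setT.
  by apply: leq_trans (handshake adj_sym adj_irr); rewrite -mulnA ltn_mul2l.
have [x0 _ _] : exists2 x0, x0 \in [set: T] & 0 < deg adj setT x0.
  by apply: exists_deg_gt; apply: leq_ltn_trans dense.
exact: (dense_contains_stars_path x0 adj_sym adj_irr adj_bip t2 lt large dense).
Qed.
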